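(* Let $G$ be any graph of order $n$ and let $H$ be any graph with root vertex $v$. Then $$n\gamma_{oir2}(H)-\alpha(G)\leq \gamma_{oir2}(G\circ_v H)\leq n\gamma_{oir2}(H)+\beta(G).$$
   Context: All graphs are finite and simple. $\alpha(F)$ is the independence number and $\beta(F)=|V(F)|-\alpha(F)$ the vertex cover number of a graph $F$. For a graph $G$, a function $f:V(G)\to\mathcal{P}(\{1,2\})$ is an outer-independent 2-rainbow dominating function (OI2RD function) if every vertex $v$ with $f(v)=\emptyset$ satisfies $\bigcup_{u\in N(v)}f(u)=\{1,2\}$ and the set $\{v: f(v)=\emptyset\}$ is independent. The weight of $f$ is $\sum_{v}|f(v)|$ and $\gamma_{oir2}(G)$ is the minimum weight of an OI2RD function of $G$. For a graph $G$ with $V(G)=\{g_1,\dots,g_n\}$ and a graph $H$ with a distinguished vertex (root) $v$, the rooted product $G\circ_v H$ has vertex set $V(G)\times V(H)$ and edge set $\bigcup_{i=1}^n\{(g_i,h)(g_i,h') : hh'\in E(H)\}\cup\{(g_i,v)(g_j,v): g_ig_j\in E(G)\}$. *)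

From mathcomp Require Import all_boot.
Set Implicit Arguments. Unset Strict Implicit. Unset Printing Implicit Defensive.

(* A finite simple graph on a finType T is a relation e : rel T that is
   symmetric and irreflexive. Colours {1,2} are encoded as bool. *)
Definition simple_graph (T : finType) (e : rel T) : Prop :=
  symmetric e /\ irreflexive e.

Definition independent (T : finType) (e : rel T) (S : {set T}) : bool :=
  [forall x in S, forall y in S, ~~ e x y].

Definition alpha (T : finType) (e : rel T) : nat :=
  \max_(S : {set T} | independent e S) #|S|.

Definition beta (T : finType) (e : rel T) : nat := #|T| - alpha e.

Definition is_OI2RD (T : finType) (e : rel T) (f : {ffun T -> {set bool}}) : bool :=
  [forall v, (f v == set0) ==>
     (\bigcup_(u | e v u) f u == [set: bool])]
  && independent e [set v | f v == set0].

Definition weight (T : finType) (f : {ffun T -> {set bool}}) : nat :=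
  \sum_(v : T) #|f v|.

(* minimum weight; default value 2|V| is the weight of the constant {1,2}
   function, which is always an OI2RD function, so this is the true minimum. *)
Definition gamma_oir2 (T : finType) (e : rel T) : nat :=
  \big[minn/(#|T|).*2]_(f : {ffun T -> {set bool}} | is_OI2RD e f) weight f.

Definition rooted_product (T1 T2 : finType) (eG : rel T1) (eH : rel T2) (v : T2)
  : rel (T1 * T2) :=
  fun x y => ((x.1 == y.1) && eH x.2 y.2)
             || [&& x.2 == v, y.2 == v & eG x.1 y.1].

From mathcomp Require Import all_boot.
Set Implicit Arguments. Unset Strict Implicit. Unset Printing Implicit Defensive.

(* Upper bound: put a minimum OI2RD function of H on every copy of
   H; the only defect is that empty roots may be adjacent along G, which is
   repaired by giving {1} to the roots outside a maximum independent set of G,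
   at cost at most beta(G).  Lower bound: restricted to one copy of H, an OI2RD
   function of the product is an OI2RD function of H except that an empty root
   may be dominated from other copies; giving it {1} costs 1 per copy with an
   empty root, and those copies are indexed by an independent set of G. *)

Lemma is_OI2RDP (T : finType) (e : rel T) (f : {ffun T -> {set bool}}) :
  reflect ((forall x, f x = set0 -> forall c, exists2 u, e x u & c \in f u) /\
           (forall x y, f x = set0 -> f y = set0 -> ~~ e x y)) (is_OI2RD e f).
Proof.
apply: (iffP andP) => [[dom ind]|[dom ind]]; split.
- move=> x fx0 c; move/forallP/(_ x): dom; rewrite fx0 eqxx => /eqP domx.
  have : c \in [set: bool] by rewrite inE.
  by rewrite -domx => /bigcupP[u]; exists u.
- move=> x y fx0 fy0; move/forallP/(_ x)/implyP: ind; rewrite inE fx0 eqxx.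
  by move=> /(_ isT)/forallP/(_ y)/implyP; rewrite inE fy0 eqxx; apply.
- apply/forallP => x; apply/implyP => /eqP fx0.
  rewrite eqEsubset subsetT; apply/subsetP => c _.
  by have [u exu cu] := dom x fx0 c; apply/bigcupP; exists u.
- apply/forallP => x; apply/implyP; rewrite inE => /eqP fx0.
  by apply/forallP => y; apply/implyP; rewrite inE => /eqP; apply: ind.
Qed.

Lemma bigminn_inf_seq (I : eqType) (r : seq I) (P : pred I) (F : I -> nat) d i :
  i \in r -> P i -> \big[minn/d]_(j <- r | P j) F j <= F i.
Proof.
elim: r => [|a r IHr] //; rewrite inE big_cons => /orP[/eqP<- -> | ir Pi].
  exact: geq_minl.
by case: ifP => _; [apply: leq_trans (geq_minr _ _) _|]; apply: IHr.
Qed.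

Section GammaOIR2.

Variables (T : finType) (e : rel T).

Lemma gamma_oir2_min (f : {ffun T -> {set bool}}) :
  is_OI2RD e f -> gamma_oir2 e <= weight f.
Proof. by apply: bigminn_inf_seq; rewrite mem_index_enum. Qed.

Lemma is_OI2RD_setT : is_OI2RD e [ffun => [set: bool]].
Proof.
by apply/is_OI2RDP; split=> [x|x y]; rewrite ffunE => /setP/(_ true); rewrite !inE.
Qed.

Lemma gamma_oir2_witness :
  exists2 f, is_OI2RD e f & weight f = gamma_oir2 e.
Proof.
apply: (big_ind (fun n => exists2 f, is_OI2RD e f & weight f = n)).
- exists [ffun => [set: bool]]; first exact: is_OI2RD_setT.
  rewrite /weight (eq_bigr (fun=> 2)) => [|x _]; last by rewrite ffunE cardsT card_bool.
  by rewrite sum_nat_const muln2.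
- by move=> m n fm fn; rewrite /minn; case: ifP.
- by move=> f Df; exists f.
Qed.

Lemma alpha_max (S : {set T}) : independent e S -> #|S| <= alpha e.
Proof. exact: leq_bigmax_cond. Qed.

Lemma alpha_witness : exists2 S, independent e S & #|S| = alpha e.
Proof.
have indep0 : independent e set0 by apply/forallP => x; rewrite inE.
have [|S indS maxS] := @eq_bigmax_cond _ (independent e) (fun S => #|S|).
  by apply/card_gt0P; exists set0.
by exists S; rewrite // -maxS.
Qed.

End GammaOIR2.

Definition fill_empty (T : finType) (P : {set T}) (f : {ffun T -> {set bool}}) :
  {ffun T -> {set bool}} :=
  [ffun x => if (x \in P) && (f x == set0) then [set true] else f x].

Section FillEmpty.

Variables (T : finType) (P : {set T}) (f : {ffun T -> {set bool}}).

Lemma fill_empty_sub x : f x \subset fill_empty P f x.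
Proof. by rewrite ffunE; case: ifP => // /andP[_ /eqP->]; apply: sub0set. Qed.

Lemma fill_empty_eq0 x : fill_empty P f x = set0 -> f x = set0 /\ x \notin P.
Proof.
rewrite ffunE; case: ifP => [_ /setP/(_ true)|]; first by rewrite !inE.
by move=> /negbT filled fx0; split=> //; apply: contra filled => ->; rewrite fx0 eqxx.
Qed.

Lemma weight_fill_empty :
  weight (fill_empty P f) <= weight f + #|[set x in P | f x == set0]|.
Proof.
rewrite /weight -sum1_card [X in _ + X]big_mkcond -big_split /=.
apply: leq_sum => x _.
by rewrite ffunE inE; case: ifP => _; rewrite ?cards1 ?leq_addl ?addn0.
Qed.

End FillEmpty.

Lemma weight_pair (T1 T2 : finType) (f : {ffun T1 * T2 -> {set bool}}) :
  weight f = \sum_(i : T1) \sum_(h : T2) #|f (i, h)|.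
Proof. by rewrite /weight pair_bigA; apply: eq_bigr => -[]. Qed.

Section RootedProduct.

Variables (TG TH : finType) (eG : rel TG) (eH : rel TH) (v : TH).

Local Notation eGH := (rooted_product eG eH v).

Definition fibre (g : {ffun TG * TH -> {set bool}}) (i : TG) : {ffun TH -> {set bool}} :=
  [ffun h => g (i, h)].

Definition lift_copies (f : {ffun TH -> {set bool}}) : {ffun TG * TH -> {set bool}} :=
  [ffun x => f x.2].

Lemma weight_fibres g : weight g = \sum_(i : TG) weight (fibre g i).
Proof. by rewrite weight_pair; apply: eq_bigr => i _; apply: eq_bigr => h _; rewrite ffunE. Qed.

Lemma weight_lift_copies f : weight (lift_copies f) = #|TG| * weight f.
Proof.
rewrite weight_pair -sum_nat_const; apply: eq_bigr => i _.
by apply: eq_bigr => h _; rewrite ffunE.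
Qed.

Lemma empty_roots_independent g :
  is_OI2RD eGH g -> independent eG [set i | g (i, v) == set0].
Proof.
case/is_OI2RDP => _ ind; apply/forallP => i; apply/implyP; rewrite inE => /eqP gi0.
apply/forallP => j; apply/implyP; rewrite inE => /eqP gj0.
by apply: contra (ind _ _ gi0 gj0) => eij; rewrite /rooted_product /= eqxx eij orbT.
Qed.

Lemma gamma_oir2_le_fibre g i : is_OI2RD eGH g ->
  gamma_oir2 eH <= weight (fibre g i) + (g (i, v) == set0).
Proof.
case/is_OI2RDP => dom ind.
have fill0 h : fill_empty [set v] (fibre g i) h = set0 -> g (i, h) = set0 /\ h != v.
  by case/fill_empty_eq0; rewrite ffunE inE.
have Dfill : is_OI2RD eH (fill_empty [set v] (fibre g i)).
  apply/is_OI2RDP; split=> [h /fill0[gh0 hv] c | h h' /fill0[gh0 _] /fill0[gh'0 _]].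
  - have [[j u]] := dom _ gh0 c; rewrite /rooted_product /= (negbTE hv) orbF.
    case/andP => /eqP <- ehu cu; exists u => //.
    by apply: (subsetP (fill_empty_sub _ _ u)); rewrite ffunE.
  - by apply: contra (ind _ _ gh0 gh'0) => ehh'; rewrite /rooted_product /= eqxx ehh'.
apply: leq_trans (gamma_oir2_min Dfill) _.
apply: leq_trans (weight_fill_empty _ _) _; rewrite leq_add2l.
case: (altP eqP) => [_|gv]; last first.
  rewrite leqn0 cards_eq0; apply/eqP/setP => h; rewrite !inE ffunE.
  by case: eqP => // ->; apply: negbTE.
by rewrite /= -(cards1 v) subset_leq_card //; apply/subsetP => h; rewrite inE => /andP[].
Qed.

Lemma gamma_oir2_rooted_product_lower :
  #|TG| * gamma_oir2 eH <= gamma_oir2 eGH + alpha eG.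
Proof.
have [g Dg <-] := gamma_oir2_witness eGH.
set R := [set i | g (i, v) == set0].
apply: (@leq_trans (\sum_(i : TG) (weight (fibre g i) + (i \in R)))).
  by rewrite -sum_nat_const; apply: leq_sum => i _; rewrite inE gamma_oir2_le_fibre.
rewrite big_split /= -weight_fibres leq_add2l -big_mkcond sum1_card.
exact/alpha_max/empty_roots_independent.
Qed.

Lemma is_OI2RD_fill_lift_copies f S : is_OI2RD eH f -> independent eG S ->
  is_OI2RD eGH (fill_empty (setX (~: S) [set v]) (lift_copies f)).
Proof.
case/is_OI2RDP => dom ind indS.
have fill0 x : fill_empty (setX (~: S) [set v]) (lift_copies f) x = set0 ->
    f x.2 = set0 /\ (x.2 == v -> x.1 \in S).
  case: x => i h /fill_empty_eq0[]; rewrite ffunE in_setX !inE negb_and negbK.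
  by move=> fh0 /orP[iS|hv]; split=> //= /eqP hv'; rewrite hv' eqxx in hv.
apply/is_OI2RDP; split=> [[i h] /fill0[fh0 _] c | x y /fill0[fx0 xS] /fill0[fy0 yS]].
- have [u ehu cu] := dom _ fh0 c; exists (i, u); first by rewrite /rooted_product /= eqxx ehu.
  by apply: (subsetP (fill_empty_sub _ _ _)); rewrite ffunE.
- apply/negP; rewrite /rooted_product => /orP[/andP[_ exy] | /and3P[xv yv exy]].
    by move: (ind _ _ fx0 fy0); rewrite exy.
  move/forallP/(_ x.1)/implyP/(_ (xS xv))/forallP/(_ y.1)/implyP/(_ (yS yv)): indS.
  by rewrite exy.
Qed.

Lemma gamma_oir2_rooted_product_upper :
  gamma_oir2 eGH <= #|TG| * gamma_oir2 eH + beta eG.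
Proof.
have [f Df <-] := gamma_oir2_witness eH.
have [S indS cardS] := alpha_witness eG.
apply: leq_trans (gamma_oir2_min (is_OI2RD_fill_lift_copies Df indS)) _.
apply: leq_trans (weight_fill_empty _ _) _.
have -> : beta eG = #|~: S| by rewrite cardsCs setCK cardS.
rewrite weight_lift_copies leq_add2l.
rewrite -[#|~: S|]muln1 -(cards1 v) -cardsX subset_leq_card //.
by apply/subsetP => x; rewrite inE => /andP[].
Qed.

End RootedProduct.

Theorem mainTheorem6 (TG TH : finType) (eG : rel TG) (eH : rel TH) (v : TH) :
  simple_graph eG -> simple_graph eH ->
  #|TG| * gamma_oir2 eH - alpha eG <= gamma_oir2 (rooted_product eG eH v)
  /\ gamma_oir2 (rooted_product eG eH v) <= #|TG| * gamma_oir2 eH + beta eG.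
Proof.
(* Both bounds hold for arbitrary relations. *)
move=> _ _; split; last exact: gamma_oir2_rooted_product_upper.
by rewrite leq_subLR addnC gamma_oir2_rooted_product_lower.
Qed.
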